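(* Let $t \in \mathbb{Q}_2$ with $|t - 1| \le 2^{-5}$ (i.e. $t \equiv 1 \pmod{32}$). Let $z \in \mathbb{Q}_2$ lie in $\overline{D}(\tfrac{19}{2}, 2^{-4})$ or in $\overline{D}(\tfrac{27}{2}, 2^{-4})$. Then the forward orbit of $z$ under $f_t$ is bounded.
   Context: Let $|\cdot|$ denote the $2$-adic absolute value on $\mathbb{C}_2$, normalized by $|2| = 1/2$. The notation $\overline{D}(a,\delta)$ denotes the closed disk $\{z \in \mathbb{C}_2 : |z-a| \le \delta\}$. For $t \in \mathbb{C}_2$, let $f_t(z) = -\tfrac32 t(-2z^3+3z^2)+1$. *)

From mathcomp Require Import all_boot all_order all_algebra.
Set Implicit Arguments. Unset Strict Implicit. Unset Printing Implicit Defensive.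
Import Order.TTheory GRing.Theory Num.Theory.
Local Open Scope ring_scope.

(* A 2-adic integer u in Z_2 is given by a coherent sequence of integer
   approximations: u n is congruent to u modulo 2^n, i.e.
   u (n+1) = u n  (mod 2^n).  Every element of Z_2 has such a
   representation (non-uniquely); every coherent sequence defines a unique
   element of Z_2. *)
Definition Z2seq := nat -> int.
Definition Z2coh (u : Z2seq) : Prop :=
  forall n : nat, (u n.+1 = u n %[mod (2 ^+ n : int)])%Z.

(* An element of Q_2 is written u / 2^e with e : nat and u in Z_2.
   The pair (e, u) represents u / 2^e. *)
Definition Q2 := (nat * Z2seq)%type.
Definition Q2coh (q : Q2) : Prop := Z2coh q.2.

Definition Q2add (p q : Q2) : Q2 :=
  ((p.1 + q.1)%N, fun n => (2 ^+ q.1) * p.2 n + (2 ^+ p.1) * q.2 n).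
Definition Q2mul (p q : Q2) : Q2 :=
  ((p.1 + q.1)%N, fun n => p.2 n * q.2 n).
Definition Q2opp (p : Q2) : Q2 := (p.1, fun n => - p.2 n).
Definition Q2sub (p q : Q2) : Q2 := Q2add p (Q2opp q).

Definition Q2const (a : int) (e : nat) : Q2 := (e, fun _ => a).

(* 2-adic absolute value, normalized by |2| = 1/2:
   Q2abs_le q k  <->  |q| <= 2^k.
   For q = u / 2^e we have |q| = 2^(e - v_2(u)), so |q| <= 2^k iff
   v_2(u) >= m := e - k, i.e. 2^m divides u (vacuous if m <= 0); since
   u = u m (mod 2^m), this is equivalent to u m = 0 (mod 2^m). *)
Definition Q2abs_le (q : Q2) (k : int) : Prop :=
  let m := (q.1%:Z - k)%R in
  (m <= 0)%R \/ (q.2 `|m|%N = 0 %[mod (2 ^+ `|m|%N : int)])%Z.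

Definition Q2closed_disk (a : Q2) (k : int) (z : Q2) : Prop :=
  Q2abs_le (Q2sub z a) k.

Definition f_t (t z : Q2) : Q2 :=
  let z2 := Q2mul z z in
  let z3 := Q2mul z2 z in
  Q2add
    (Q2mul (Q2mul (Q2const (-3) 1) t)
           (Q2add (Q2mul (Q2const (-2) 0) z3) (Q2mul (Q2const 3 0) z2)))
    (Q2const 1 0).

Definition bounded_orbit (g : Q2 -> Q2) (z : Q2) : Prop :=
  exists k : int, forall n : nat, Q2abs_le (iter n g z) k.

(* At every precision n, the integer approximations of t and z give rationals
   t_n and z_n with t_n = 1 + 32 s and z_n = 19/2 + 16 w (or 27/2 + 16 w),
   where s and w have odd denominators.  The union of the four cosets
   19/2 + 16 Z_(2), 3 + 4 Z_(2), 27/2 + 16 Z_(2) and 2 + 4 Z_(2) is mapped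
   into itself by the rational map x |-> -3/2 t_n (-2 x^3 + 3 x^2) + 1, so the
   n-th approximations of the whole orbit lie in (1/2) Z_(2).  Since this holds
   for every large n, every point of the orbit has absolute value at most 2. *)
From mathcomp Require Import all_boot all_order all_algebra.
From mathcomp Require Import ring lra zify.
Import Order.TTheory GRing.Theory Num.Theory.
Local Open Scope ring_scope.

Definition two_integral (x : rat) : Prop :=
  exists a b : int, ~~ (2 %| b)%Z /\ x = a%:~R / b%:~R.

Lemma intr_odd_neq0 {b : int} : ~~ (2 %| b)%Z -> (b%:~R : rat) != 0.
Proof. by move=> b_odd; rewrite intr_eq0; apply: contra b_odd => /eqP ->. Qed.

Lemma oddzM (b c : int) : ~~ (2 %| b)%Z -> ~~ (2 %| c)%Z -> ~~ (2 %| b * c)%Z.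
Proof. by rewrite !unfold_in /= abszM Euclid_dvdM // negb_or => -> ->. Qed.

Lemma two_integral_int (a : int) : two_integral a%:~R.
Proof. by exists a, 1; rewrite divr1. Qed.

Lemma two_integral_nat (n : nat) : two_integral n%:R.
Proof. by have := two_integral_int n; rewrite -pmulrn. Qed.

Lemma two_integral1 : two_integral 1.
Proof. exact: (two_integral_nat 1). Qed.

Lemma two_integralD x y : two_integral x -> two_integral y -> two_integral (x + y).
Proof.
move=> [a [b [b_odd ->]]] [c [d [d_odd ->]]].
exists (a * d + c * b), (b * d); split; first exact: oddzM.
have := intr_odd_neq0 b_odd; have := intr_odd_neq0 d_odd => d0 b0.
by rewrite !rmorphD !rmorphM /=; field; rewrite b0 d0.
Qed.

Lemma two_integralM x y : two_integral x -> two_integral y -> two_integral (x * y).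
Proof.
move=> [a [b [b_odd ->]]] [c [d [d_odd ->]]].
exists (a * c), (b * d); split; first exact: oddzM.
have := intr_odd_neq0 b_odd; have := intr_odd_neq0 d_odd => d0 b0.
by rewrite !rmorphM /=; field; rewrite b0 d0.
Qed.

Lemma two_integralX x n : two_integral x -> two_integral (x ^+ n).
Proof.
move=> x2; elim: n => [|n IHn]; first by rewrite expr0; apply: two_integral1.
by rewrite exprS; apply: two_integralM.
Qed.

Lemma two_integral_half_pronic x : two_integral x -> two_integral (x * (x + 1) / 2).
Proof.
move=> [a [b [b_odd ->]]].
have [c ac] : exists c : int, a * (a + b) = 2 * c.
  have [/dvdzP [k ->]|a_odd] := boolP (2 %| a)%Z.
    by exists (k * (k * 2 + b)); ring.
  have /dvdzP [k abk] : (2 %| a + b)%Z by lia.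
  by exists (a * k); rewrite abk; ring.
exists c, (b * b); split; first exact: oddzM.
have b0 := intr_odd_neq0 b_odd.
have -> : (c%:~R : rat) = (a * (a + b))%:~R / 2 by rewrite ac rmorphM /=; field.
by rewrite !rmorphM rmorphD /=; field; rewrite b0.
Qed.

#[local] Hint Resolve two_integralD two_integralM two_integralX two_integral_nat
  two_integral_int two_integral_half_pronic two_integral1 : two_integral.

Definition fq (t x : rat) : rat := (- 3 / 2) * t * (- 2 * (x * x * x) + 3 * (x * x)) + 1.

Definition in_trap (x : rat) : Prop := exists2 w, two_integral w &
  [\/ x = 19 / 2 + 16 * w, x = 3 + 4 * w, x = 27 / 2 + 16 * w | x = 2 + 4 * w].

(* Each witness is (fq t x - c) / m expanded as a polynomial in s and w, where
   c + m * _ is the target coset; the half-integral part of the second case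
   is absorbed by 27 w (w + 1) / 2. *)
Lemma in_trap_fq s x : two_integral s -> in_trap x -> in_trap (fq (1 + 2 ^+ 5 * s) x).
Proof.
rewrite /fq => s2 [w w2 [->|->|->|->]].
- exists (541 + (2^+4 * 3 * 19^+2) * s + (3^+2 * 17 * 19) * w
    + (2^+5 * 3^+2 * 17 * 19) * w * s + (2^+6 * 3^+4) * w^+2
    + (2^+11 * 3^+4) * w^+2 * s + (2^+10 * 3) * w^+3 + (2^+15 * 3) * w^+3 * s);
    first by auto 20 with two_integral.
  by apply: Or42; field.
- exists (2 + (3^+4) * s + (2^+4 * 3^+3) * w * s + (2^+4 * 3^+2 * 5) * w^+2 * s
    + (2^+2 * 3) * w^+3 + (2^+7 * 3) * w^+3 * s + (3^+2) * w^+2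
    + 27 * (w * (w + 1) / 2)); first by auto 20 with two_integral.
  by apply: Or41; field.
- exists ((2^+3 * 5 * 41) + (2^+3 * 3^+8) * s + (3^+5 * 5^+2) * w
    + (2^+5 * 3^+5 * 5^+2) * w * s + (2^+6 * 3^+2 * 13) * w^+2
    + (2^+11 * 3^+2 * 13) * w^+2 * s + (2^+10 * 3) * w^+3 + (2^+15 * 3) * w^+3 * s);
    first by auto 20 with two_integral.
  by apply: Or44; field.
- exists (1 + (2^+4 * 3) * s + (2 * 3^+2) * w + (2^+6 * 3^+2) * w * s
    + (2 * 3^+3) * w^+2 + (2^+6 * 3^+3) * w^+2 * s + (2^+4 * 3) * w^+3
    + (2^+9 * 3) * w^+3 * s); first by auto 20 with two_integral.
  by apply: Or42; field.
Qed.

Lemma in_trap_iter_fq s x j :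
  two_integral s -> in_trap x -> in_trap (iter j (fq (1 + 2 ^+ 5 * s)) x).
Proof. by move=> s2 x_trap; elim: j => //= j; apply: in_trap_fq. Qed.

Lemma in_trap_two_integral_double x : in_trap x -> two_integral (2 ^+ 1 * x).
Proof.
move=> [w w2 [->|->|->|->]].
- have -> : 2 ^+ 1 * (19 / 2 + 16 * w) = 19 + 32 * w :> rat by field.
  by auto with two_integral.
- by auto 10 with two_integral.
- have -> : 2 ^+ 1 * (27 / 2 + 16 * w) = 27 + 32 * w :> rat by field.
  by auto with two_integral.
- by auto 10 with two_integral.
Qed.

Lemma eqz_modE (d x y : int) : (x = y %[mod d])%Z <-> (d %| x - y)%Z.
Proof. by rewrite -eqz_mod_dvd; split => [->|/eqP]. Qed.

Lemma Z2coh_dvd (u : Z2seq) m n : Z2coh u -> (m <= n)%N -> (2 ^+ m %| u n - u m)%Z.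
Proof.
move=> u_coh; elim: n => [|n IHn]; first by rewrite leqn0 => /eqP ->; rewrite subrr.
rewrite leq_eqVlt => /orP [/eqP ->|lt_mn]; first by rewrite subrr.
have -> : u n.+1 - u m = (u n.+1 - u n) + (u n - u m) by ring.
apply: rpredD; last exact: IHn.
by apply: dvdz_trans (dvdz_exp2l 2 (lt_mn : (m <= n)%N)) _; apply/eqz_modE.
Qed.

Lemma Q2coh_add p q : Q2coh p -> Q2coh q -> Q2coh (Q2add p q).
Proof.
move=> p_coh q_coh n; apply/eqz_modE => /=.
have -> : 2 ^+ q.1 * p.2 n.+1 + 2 ^+ p.1 * q.2 n.+1 - (2 ^+ q.1 * p.2 n + 2 ^+ p.1 * q.2 n)
  = 2 ^+ q.1 * (p.2 n.+1 - p.2 n) + 2 ^+ p.1 * (q.2 n.+1 - q.2 n) by ring.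
by apply: rpredD; apply: dvdz_mull; apply/eqz_modE.
Qed.

Lemma Q2coh_mul p q : Q2coh p -> Q2coh q -> Q2coh (Q2mul p q).
Proof.
move=> p_coh q_coh n; apply/eqz_modE => /=.
have -> : p.2 n.+1 * q.2 n.+1 - p.2 n * q.2 n
  = p.2 n.+1 * (q.2 n.+1 - q.2 n) + (p.2 n.+1 - p.2 n) * q.2 n by ring.
by apply: rpredD; [apply: dvdz_mull | apply: dvdz_mulr]; apply/eqz_modE.
Qed.

Lemma Q2coh_opp p : Q2coh p -> Q2coh (Q2opp p).
Proof.
move=> p_coh n; apply/eqz_modE => /=.
by rewrite -opprD rpredN; apply/eqz_modE.
Qed.

Lemma Q2coh_const a e : Q2coh (Q2const a e).
Proof. by move=> n; apply/eqz_modE; rewrite /= subrr. Qed.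

Lemma Q2coh_sub p q : Q2coh p -> Q2coh q -> Q2coh (Q2sub p q).
Proof. by move=> p_coh q_coh; apply: Q2coh_add => //; apply: Q2coh_opp. Qed.

Lemma Q2coh_f_t t z : Q2coh t -> Q2coh z -> Q2coh (f_t t z).
Proof.
move=> t_coh z_coh; have c := Q2coh_const.
by do ![apply: Q2coh_add | apply: Q2coh_mul | done].
Qed.

Lemma Q2coh_iter_f_t t z j : Q2coh t -> Q2coh z -> Q2coh (iter j (f_t t) z).
Proof. by move=> t_coh z_coh; elim: j => //= j; apply: Q2coh_f_t. Qed.

Definition approx (n : nat) (q : Q2) : rat := (q.2 n)%:~R / 2 ^+ q.1.

Lemma approx_add n p q : approx n (Q2add p q) = approx n p + approx n q.
Proof.
rewrite /approx /= rmorphD !rmorphM !rmorphXn /= exprD.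
by field; rewrite !expf_neq0.
Qed.

Lemma approx_mul n p q : approx n (Q2mul p q) = approx n p * approx n q.
Proof. by rewrite /approx /= !rmorphM /= exprD; field; rewrite !expf_neq0. Qed.

Lemma approx_sub n p q : approx n (Q2sub p q) = approx n p - approx n q.
Proof. by rewrite approx_add /approx /= rmorphN mulNr. Qed.

Lemma approx_f_t n t z : approx n (f_t t z) = fq (approx n t) (approx n z).
Proof. by rewrite /f_t !(approx_add, approx_mul) /approx /= !divr1. Qed.

Lemma approx_iter_f_t n t z j :
  approx n (iter j (f_t t) z) = iter j (fq (approx n t)) (approx n z).
Proof. by elim: j => //= j IHj; rewrite approx_f_t IHj. Qed.

Lemma Q2abs_le_approx q (j : nat) n : Q2coh q -> Q2abs_le q (- j%:Z) ->
  (q.1 + j <= n)%N -> exists w : int, approx n q = 2 ^+ j * w%:~R.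
Proof.
rewrite /Q2abs_le opprK -PoszD => q_coh [small|q_small] le_n.
  move: small; rewrite lez_nat leqn0 addn_eq0 => /andP [/eqP q0 /eqP ->].
  by exists (q.2 n); rewrite /approx q0 expr0 mul1r divr1.
have /dvdzP [w qw] : (2 ^+ (q.1 + j) %| q.2 n)%Z.
  move/eqz_modE: q_small; rewrite subr0 => q_small.
  rewrite -(subrK (q.2 (q.1 + j)%N) (q.2 n)).
  by apply: rpredD => //; apply: Z2coh_dvd.
by exists w; rewrite /approx qw rmorphM rmorphXn /= exprD; field; rewrite expf_neq0.
Qed.

Lemma Q2closed_disk_approx (a : int) e z (j : nat) n : Q2coh z ->
  Q2closed_disk (Q2const a e) (- j%:Z) z -> (z.1 + e + j <= n)%N ->
  exists w : int, approx n z = a%:~R / 2 ^+ e + 2 ^+ j * w%:~R.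
Proof.
move=> z_coh z_disk le_n.
have [w zw] := @Q2abs_le_approx _ _ _ (Q2coh_sub _ _ z_coh (Q2coh_const a e)) z_disk le_n.
by exists w; rewrite -zw approx_sub /approx addrC subrK.
Qed.

(* |q| <= 2^k asks 2^(q.1 - k) to divide the (q.1 - k)-th approximation;
   coherence transfers this divisibility from a single large n. *)
Lemma Q2abs_le_of_approx q (k N : nat) : Q2coh q ->
  (forall n, (N <= n)%N -> two_integral (2 ^+ k * approx n q)) -> Q2abs_le q k.
Proof.
move=> q_coh q_approx; rewrite /Q2abs_le.
have [le_ek|lt_ke] := leqP q.1 k; first by left; rewrite subr_le0 lez_nat.
right; set m := `|_|%N.
have qe : q.1 = (m + k)%N by rewrite /m -(subnK (ltnW lt_ke)) PoszD addrK.
set n := maxn N m.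
have [a [b [b_odd qab]]] := q_approx n (leq_maxl N m).
have b0 := intr_odd_neq0 b_odd.
have qb : q.2 n * b = a * 2 ^+ m.
  apply: (intr_inj (R := rat)); rewrite !rmorphM rmorphXn /=.
  move: qab; rewrite /approx qe exprD => qab.
  have -> : (q.2 n)%:~R = 2 ^+ k * ((q.2 n)%:~R / (2 ^+ m * 2 ^+ k)) * 2 ^+ m :> rat.
    by field; rewrite !expf_neq0.
  by rewrite qab; field; rewrite b0.
have dvd_n : (2 ^+ m %| q.2 n)%Z.
  rewrite -(@Gauss_dvdzl _ _ b); first by rewrite qb dvdz_mull.
  by rewrite coprimezE abszX coprimeXl // prime_coprime.
apply/eqz_modE; rewrite subr0 -(subKr (q.2 n) (q.2 m)).
by apply: rpredB => //; apply: Z2coh_dvd (leq_maxr N m).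
Qed.

Theorem mainTheorem6 (t z : Q2) :
  Q2coh t -> Q2coh z ->
  Q2abs_le (Q2sub t (Q2const 1 0)) (-5) ->
  (Q2closed_disk (Q2const 19 1) (-4) z \/ Q2closed_disk (Q2const 27 1) (-4) z) ->
  bounded_orbit (f_t t) z.
Proof.
move=> t_coh z_coh t_near1 z_disk; exists 1 => j.
apply: (@Q2abs_le_of_approx _ 1 (t.1 + z.1 + 6)); first exact: Q2coh_iter_f_t.
move=> n le_n; rewrite approx_iter_f_t; apply: in_trap_two_integral_double.
have [s ts] := @Q2closed_disk_approx 1 0 t 5 n t_coh t_near1 ltac:(lia).
rewrite ts expr0 divr1; apply: in_trap_iter_fq; first exact: two_integral_int.
have le_zn : (z.1 + 1 + 4 <= n)%N by lia.
case: z_disk => [z_disk|z_disk];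
  have [w zw] := @Q2closed_disk_approx _ _ _ 4 n z_coh z_disk le_zn;
  exists w%:~R; rewrite ?zw; try exact: two_integral_int.
- by apply: Or41; field.
- by apply: Or43; field.
Qed.
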